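(* Consider the system $x[k+1]=Ax[k]+w[k]$, $y[k]=Cx[k]+v[k]$, where $A=\mathrm{diag}(\lambda_1,\dots,\lambda_n)$ with $0\le|\lambda_i|<1$ for all $i$, the process noise covariance $W$ is diagonal (and positive semidefinite), and the measurement noise covariance is $V=\mathbf{0}$. Then for every sensor selection $\mu$: (a) for all $i\in\{1,\dots,n\}$, $W_{ii}\le(\Sigma(\mu))_{ii}\le \frac{W_{ii}}{1-\lambda_i^2}$; (b) if $W_{ii}=0$ for some $i$, then $(\Sigma(\mu))_{ii}=0$; (c) if $\lambda_i=0$ for some $i$, then $(\Sigma(\mu))_{ii}=W_{ii}$; (d) if for some $i$, $W_{ii}\neq0$ and the $i$th column of $C(\mu)$ is zero, then $(\Sigma(\mu))_{ii}=\frac{W_{ii}}{1-\lambda_i^2}$; (e) if for some $i$, $\mathbf{e}_i\in\mathrm{rowspace}(C(\mu))$, then $(\Sigma(\mu))_{ii}=W_{ii}$.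
   Context: Here $w[k]$ and $v[k]$ are uncorrelated zero-mean white Gaussian noise processes with covariances $W$ and $V$. The rows of $C$ are grouped into candidate sensors $i=1,\dots,q$ (sensor $i$ contributes rows $C_i$); a sensor selection is $\mu\in\{0,1\}^q$, and $C(\mu)$ stacks the $C_i$ with $\mu_i=1$, $V(\mu)$ being the corresponding (here zero) noise covariance. $\Sigma(\mu)$ is the limit as $k\to\infty$ of the a priori error covariance $\Sigma_{k|k-1}(\mu)$ of the Kalman filter using the selected sensors; it satisfies $\Sigma(\mu)=A\Sigma(\mu)A^T+W-A\Sigma(\mu)C(\mu)^T(C(\mu)\Sigma(\mu)C(\mu)^T+V(\mu))^{-1}C(\mu)\Sigma(\mu)A^T$, with inverses interpreted as pseudo-inverses when singular. $\mathbf{e}_i$ denotes the row vector with $1$ in position $i$ and zeros elsewhere. *)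

From HB Require Import structures.
From mathcomp Require Import all_boot all_order all_algebra.
From mathcomp Require Import all_classical all_reals topology normedtype sequences.

Set Implicit Arguments.
Unset Strict Implicit.
Unset Printing Implicit Defensive.

Import Order.TTheory GRing.Theory Num.Theory numFieldNormedType.Exports.
Local Open Scope ring_scope.
Local Open Scope classical_set_scope.

Section Defs.
Variable R : realType.

Definition psd (n : nat) (M : 'M[R]_n) : Prop :=
  M^T = M /\ forall x : 'rV[R]_n, 0 <= (x *m M *m x^T) 0 0.

Definition is_pinv (p r : nat) (M : 'M[R]_(p, r)) (X : 'M[R]_(r, p)) : Prop :=
  [/\ M *m X *m M = M, X *m M *m X = X,
      (M *m X)^T = M *m X & (X *m M)^T = X *m M].

(* Moore--Penrose pseudo-inverse (it exists and is unique; xget picks it) *)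
Definition pinv (p r : nat) (M : 'M[R]_(p, r)) : 'M[R]_(r, p) :=
  xget 0 [set X | is_pinv M X].

Definition kalman_step (n p : nat) (A W : 'M[R]_n) (Cm : 'M[R]_(p, n))
    (V : 'M[R]_p) (P : 'M[R]_n) : 'M[R]_n :=
  A *m P *m A^T + W
  - A *m P *m Cm^T *m pinv (Cm *m P *m Cm^T + V) *m Cm *m P *m A^T.

(* Sigma_{k|k-1}, starting from Sigma_{0|-1} = Sig0 *)
Definition kalman_cov (n p : nat) (A W : 'M[R]_n) (Cm : 'M[R]_(p, n))
    (V : 'M[R]_p) (Sig0 : 'M[R]_n) (k : nat) : 'M[R]_n :=
  iter k (kalman_step A W Cm V) Sig0.

(* Sensors: the m rows of C are grouped into q sensors by s : 'I_m -> 'I_q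
   (row j belongs to sensor s j). A selection mu : 'I_q -> bool selects
   sensors; C(mu) stacks (in order) the rows of the selected sensors. *)
Definition selrows (m q : nat) (s : 'I_m -> 'I_q) (mu : {ffun 'I_q -> bool})
  : {set 'I_m} := [set j | mu (s j)].

Definition Csel (m n q : nat) (C : 'M[R]_(m, n)) (s : 'I_m -> 'I_q)
    (mu : {ffun 'I_q -> bool}) : 'M[R]_(#|selrows s mu|, n) :=
  \matrix_(k < #|selrows s mu|, j < n) C (enum_val k) j.

End Defs.

(* With V = 0 the Kalman recursion reads P' = A Q(P) A^T + W, where
   Q(P) = P - P C^T (C P C^T)^+ C P is the measurement update.  Q(P) is
   positive semidefinite, below P in the Loewner order, and annihilated by C;
   moreover, if the i-th column of C vanishes, Q(P) dominates every multiple
   c e_i^T e_i that P dominates, because z Q(P) z^T = w P w^T where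
   w = z - z P C^T (C P C^T)^+ C has the same i-th coordinate as z.
   For diagonal A and W this gives, entrywise,
   W_ii <= P'_ii <= lam_i^2 P_ii + W_ii, P'_ii = W_ii when e_i is a
   combination of the rows of C, and
   P_k >= (W_ii \sum_{j<k} lam_i^(2j)) e_i^T e_i when the i-th column of C
   is zero; passing to the limit yields (a)-(e). *)

From Pilot Require Import Defs.
From HB Require Import structures.
From mathcomp Require Import all_boot all_order all_algebra.
From mathcomp Require Import all_classical all_reals topology normedtype sequences.
Import Order.TTheory GRing.Theory Num.Theory numFieldNormedType.Exports.
Local Open Scope ring_scope.
Local Open Scope classical_set_scope.
Set Implicit Arguments.
Unset Strict Implicit.

Section GramMatrix.
Variable R : realFieldType.

Lemma row_gram_eq0 p (x : 'rV[R]_p) : (x *m x^T) 0 0 = 0 -> x = 0.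
Proof.
rewrite mxE => /eqP; rewrite psumr_eq0 => [/allP x2_eq0|j _]; last first.
  by rewrite mxE sqr_ge0.
apply/rowP => j; rewrite mxE.
have /x2_eq0 : j \in index_enum 'I_p by rewrite mem_index_enum.
by rewrite mxE -expr2 sqrf_eq0 => /implyP /(_ isT) /eqP.
Qed.

Lemma gram_unitmx r k (G : 'M[R]_(r, k)) : row_free G -> G *m G^T \in unitmx.
Proof.
move=> freeG; rewrite -row_free_unit; apply: inj_row_free => v.
rewrite mulmxA => vGGt0.
have : ((v *m G) *m (v *m G)^T) 0 0 = 0.
  by rewrite trmx_mul mulmxA vGGt0 mul0mx mxE.
by move=> /row_gram_eq0 /eqP; rewrite mulmx_free_eq0 // => /eqP.
Qed.

End GramMatrix.

Section PseudoInverse.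
Variable R : realType.

Lemma is_pinv_unique p r (M : 'M[R]_(p, r)) X Y :
  is_pinv M X -> is_pinv M Y -> X = Y.
Proof.
case=> [MXM XMX MXsym XMsym] [MYM YMY MYsym YMsym].
have eX : X = X *m M *m Y.
  have Mt : M^T = M^T *m (M *m Y)^T by rewrite -trmx_mul MYM.
  transitivity (X *m (X^T *m (M^T *m (M *m Y)^T))).
    by rewrite -Mt -trmx_mul MXsym mulmxA XMX.
  by rewrite (mulmxA X^T) -trmx_mul MXsym MYsym !mulmxA XMX.
have eY : Y = X *m M *m Y.
  have Mt : M^T = (X *m M)^T *m M^T by rewrite -trmx_mul mulmxA MXM.
  transitivity ((X *m M)^T *m M^T *m Y^T *m Y).
    by rewrite -Mt -trmx_mul YMsym YMY.
  by rewrite -(mulmxA _ M^T) -(trmx_mul Y M) YMsym XMsym -mulmxA YMY.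
by rewrite eX -eY.
Qed.

Lemma is_pinv_tr p r (M : 'M[R]_(p, r)) X : is_pinv M X -> is_pinv M^T X^T.
Proof.
case=> [MXM XMX MXsym XMsym]; split.
- by rewrite -!trmx_mul mulmxA MXM.
- by rewrite -!trmx_mul mulmxA XMX.
- by rewrite -trmx_mul !XMsym.
- by rewrite -trmx_mul !MXsym.
Qed.

Lemma is_pinv_full_rank_factor p k r (F : 'M[R]_(p, k)) (G : 'M[R]_(k, r)) :
  row_free F^T -> row_free G ->
  is_pinv (F *m G) (G^T *m invmx (G *m G^T) *m invmx (F^T *m F) *m F^T).
Proof.
move=> freeFt freeG; have uG := gram_unitmx freeG.
have uF := gram_unitmx freeFt; rewrite trmxK in uF.
set X := G^T *m _ *m _ *m F^T.
have MXE : F *m G *m X = F *m invmx (F^T *m F) *m F^T.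
  by rewrite !mulmxA -(mulmxA F G) -(mulmxA F (G *m G^T)) mulmxV // mulmx1.
have XME : X *m (F *m G) = G^T *m invmx (G *m G^T) *m G.
  by rewrite !mulmxA -(mulmxA _ F^T) -(mulmxA _ (invmx (F^T *m F))) mulVmx // mulmx1.
split.
- by rewrite MXE !mulmxA -(mulmxA _ F^T) -(mulmxA _ (invmx (F^T *m F))) mulVmx // mulmx1.
- by rewrite XME !mulmxA -(mulmxA _ G) -(mulmxA G^T (invmx (G *m G^T))) mulVmx // mulmx1.
- by rewrite MXE !trmx_mul trmxK trmx_inv trmx_mul trmxK !mulmxA.
- by rewrite XME !trmx_mul trmxK trmx_inv trmx_mul trmxK !mulmxA.
Qed.

Lemma pinvP p r (M : 'M[R]_(p, r)) : is_pinv M (Defs.pinv M).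
Proof.
have [X MX] : exists X, is_pinv M X.
  rewrite -{1}(mulmx_base M); eexists; apply: is_pinv_full_rank_factor.
    by rewrite /row_free mxrank_tr; exact: col_base_full.
  exact: row_base_free.
exact: (@xgetPex _ 0 [set X | is_pinv M X] (ex_intro _ X MX)).
Qed.

Lemma trmx_pinv p r (M : 'M[R]_(p, r)) : (Defs.pinv M)^T = Defs.pinv M^T.
Proof. exact: is_pinv_unique (is_pinv_tr (pinvP M)) (pinvP M^T). Qed.

End PseudoInverse.

Section QuadraticForm.
Variable R : realType.

Definition qform n (M : 'M[R]_n) (x : 'rV[R]_n) : R := (x *m M *m x^T) 0 0.

Lemma qformD n (M N : 'M[R]_n) x : qform (M + N) x = qform M x + qform N x.
Proof. by rewrite /qform mulmxDr mulmxDl mxE. Qed.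

Lemma qform_congr n k (B : 'M[R]_(n, k)) (M : 'M[R]_k) x :
  qform (B *m M *m B^T) x = qform M (x *m B).
Proof. by rewrite /qform trmx_mul !mulmxA. Qed.

Lemma qform_delta n (M : 'M[R]_n) i : qform M (delta_mx 0 i) = M i i.
Proof. by rewrite /qform -rowE trmx_delta -colE !mxE. Qed.

Lemma psdD n (M N : 'M[R]_n) : psd M -> psd N -> psd (M + N).
Proof.
move=> [symM geM] [symN geN]; split; first by rewrite linearD /= symM symN.
by move=> x; rewrite -/(qform _ x) qformD; apply: addr_ge0; [exact: geM | exact: geN].
Qed.

Lemma psd_congr n k (B : 'M[R]_(n, k)) (M : 'M[R]_k) : psd M -> psd (B *m M *m B^T).
Proof.
move=> [symM geM]; split; first by rewrite !trmx_mul trmxK symM mulmxA.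
by move=> x; rewrite -/(qform _ x) qform_congr; apply: geM.
Qed.

Lemma qform_diag_ge n (W : 'M[R]_n) (z : 'rV[R]_n) i :
  is_diag_mx W -> psd W -> W i i * z 0 i ^+ 2 <= qform W z.
Proof.
move=> /is_diag_mxP diagW [_ geW].
have W_ge0 j : 0 <= W j j by rewrite -qform_delta; apply: geW.
have -> : qform W z = \sum_j W j j * z 0 j ^+ 2.
  rewrite /qform mxE; apply: eq_bigr => j _.
  rewrite !mxE (bigD1 j) //= big1 ?addr0 => [|k kj]; last by rewrite diagW ?mulr0.
  by rewrite mulrC mulrA -expr2 mulrC.
rewrite (bigD1 i) //= lerDl; apply: sumr_ge0 => j _.
by rewrite mulr_ge0 ?sqr_ge0.
Qed.

End QuadraticForm.

Definition kalman_update (R : realType) n p (C : 'M[R]_(p, n)) (P : 'M[R]_n) :=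
  P - P *m C^T *m Defs.pinv (C *m P *m C^T) *m C *m P.

Section KalmanUpdate.
Variables (R : realType) (n p : nat) (C : 'M[R]_(p, n)) (P : 'M[R]_n).
Hypothesis psdP : psd P.

Local Notation X := (Defs.pinv (C *m P *m C^T)).
Local Notation Q := (kalman_update C P).

Let symP : P^T = P. Proof. by case: psdP. Qed.

Let symX : X^T = X.
Proof. by rewrite trmx_pinv !trmx_mul trmxK symP mulmxA. Qed.

Let XMX : X *m (C *m P *m C^T) *m X = X.
Proof. by case: (pinvP (C *m P *m C^T)). Qed.

(* For y = z P C^T X C, the terms z P y^T, y P z^T and y P y^T all equal
   z P C^T X C P z^T, the last one because X (C P C^T) X = X. *)
Let kalman_update_cross (z y : 'rV[R]_n) : y = z *m P *m C^T *m X *m C ->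
  [/\ z *m Q *m z^T = z *m P *m z^T - y *m P *m y^T,
      z *m P *m y^T = y *m P *m y^T & y *m P *m z^T = y *m P *m y^T].
Proof.
move=> yE; have yPyE : y *m P *m y^T = z *m P *m C^T *m X *m C *m P *m z^T.
  rewrite yE !trmx_mul symX symP trmxK !mulmxA -!(mulmxA _ C P).
  rewrite -(mulmxA _ (C *m P) C^T) -(mulmxA _ X (C *m P *m C^T)).
  by rewrite -(mulmxA _ (X *m _) X) XMX !mulmxA.
split; rewrite yPyE.
- by rewrite /kalman_update mulmxBr mulmxBl !mulmxA.
- by rewrite yE !trmx_mul symX symP trmxK !mulmxA.
- by rewrite yE.
Qed.

Lemma qform_kalman_updateB z :
  qform Q z = qform P z - qform P (z *m P *m C^T *m X *m C).
Proof.
have [QE _ _] := kalman_update_cross (erefl (z *m P *m C^T *m X *m C)).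
by rewrite /qform QE !mxE.
Qed.

Lemma qform_kalman_update z :
  qform Q z = qform P (z - z *m P *m C^T *m X *m C).
Proof.
have [QE zPy yPz] := kalman_update_cross (erefl (z *m P *m C^T *m X *m C)).
rewrite /qform QE linearB /= !mulmxBl !mulmxBr zPy yPz.
by rewrite opprB addrA subrK.
Qed.

Lemma kalman_update_psd : psd Q.
Proof.
split=> [|z]; last by rewrite -/(qform _ z) qform_kalman_update; case: psdP => _; apply.
by rewrite /kalman_update linearB /= symP !trmx_mul trmxK symX symP !mulmxA.
Qed.

Lemma kalman_update_le z : qform Q z <= qform P z.
Proof. by rewrite qform_kalman_updateB gerBl; case: psdP => _; apply. Qed.

Lemma kalman_update_annihilated : C *m Q *m C^T = 0.
Proof.
have [MXM _ _ _] := pinvP (C *m P *m C^T).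
rewrite /kalman_update mulmxBr mulmxBl -[in RHS](subrr (C *m P *m C^T)).
by rewrite -[X in _ = _ - X]MXM !mulmxA.
Qed.

Lemma kalman_update_unobserved i (c : R) :
  col i C = 0 -> (forall z : 'rV_n, c * z 0 i ^+ 2 <= qform P z) ->
  forall z : 'rV_n, c * z 0 i ^+ 2 <= qform Q z.
Proof.
move=> Ci0 geP z; rewrite qform_kalman_update.
set w := z *m P *m C^T *m X.
have wCi0 : (w *m C) 0 i = 0.
  have := congr1 (fun v : 'cV_1 => v 0 0) (colE i (w *m C)).
  by rewrite -mulmxA -colE Ci0 mulmx0 [RHS]mxE [LHS]mxE.
have -> : z 0 i = (z - w *m C) 0 i by rewrite [RHS]mxE [X in _ + X]mxE wCi0 subr0.
exact: geP.
Qed.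

End KalmanUpdate.

Section KalmanRecursion.
Variables (R : realType) (n p : nat) (A W : 'M[R]_n) (C : 'M[R]_(p, n)).

Lemma kalman_step_update (P : 'M[R]_n) :
  kalman_step A W C 0 P = A *m kalman_update C P *m A^T + W.
Proof. by rewrite /kalman_step /kalman_update addr0 mulmxBr mulmxBl !mulmxA addrAC. Qed.

Lemma kalman_covS V Sig0 k :
  kalman_cov A W C V Sig0 k.+1 = kalman_step A W C V (kalman_cov A W C V Sig0 k).
Proof. by []. Qed.

Lemma kalman_cov_psd Sig0 k : psd W -> psd Sig0 -> psd (kalman_cov A W C 0 Sig0 k).
Proof.
move=> psdW psdSig0; elim: k => [|k IHk] //.
rewrite kalman_covS kalman_step_update; apply: psdD => //.
exact/psd_congr/kalman_update_psd.
Qed.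

End KalmanRecursion.

Section DiagonalRecursion.
Variables (R : realType) (n p : nat) (lam : 'rV[R]_n) (W : 'M[R]_n)
  (C : 'M[R]_(p, n)) (Sig0 : 'M[R]_n).
Hypotheses (diagW : is_diag_mx W) (psdW : psd W) (psdSig0 : psd Sig0).

Local Notation P k := (kalman_cov (diag_mx lam) W C 0 Sig0 k).

Let psdP k : psd (P k). Proof. exact: kalman_cov_psd. Qed.

Lemma kalman_cov_diagS k i :
  P k.+1 i i = lam 0 i ^+ 2 * kalman_update C (P k) i i + W i i.
Proof.
rewrite kalman_covS kalman_step_update mxE tr_diag_mx mul_mx_diag mul_diag_mx !mxE.
by rewrite mulrC mulrA -expr2.
Qed.

Lemma kalman_cov_ge_noise k i : W i i <= P k.+1 i i.
Proof.
rewrite kalman_cov_diagS lerDr mulr_ge0 ?sqr_ge0 // -qform_delta.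
by case: (kalman_update_psd C (psdP k)) => _; apply.
Qed.

Lemma kalman_cov_le_step k i : P k.+1 i i <= lam 0 i ^+ 2 * P k i i + W i i.
Proof.
rewrite kalman_cov_diagS lerD2r ler_wpM2l ?sqr_ge0 // -!qform_delta.
exact: kalman_update_le.
Qed.

Lemma kalman_cov_observed k i :
  ((delta_mx 0 i : 'rV_n) <= C)%MS -> P k.+1 i i = W i i.
Proof.
move=> /submxP [u eiE]; rewrite kalman_cov_diagS -[kalman_update _ _ i i]qform_delta.
rewrite eiE -qform_congr kalman_update_annihilated.
by rewrite /qform mulmx0 mul0mx mxE mulr0 add0r.
Qed.

Lemma kalman_cov_unobserved i : col i C = 0 -> forall k (z : 'rV_n),
  series (geometric (W i i) (lam 0 i ^+ 2)) k * z 0 i ^+ 2 <= qform (P k) z.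
Proof.
move=> Ci0; elim=> [|k IHk] z.
  by rewrite seriesEord /= big_ord0 mul0r; case: psdSig0 => _; apply.
have seriesSl : series (geometric (W i i) (lam 0 i ^+ 2)) k.+1
    = lam 0 i ^+ 2 * series (geometric (W i i) (lam 0 i ^+ 2)) k + W i i.
  rewrite !seriesEord /= big_ord_recl /= expr0 mulr1 addrC mulr_sumr.
  by congr (_ + _); apply: eq_bigr => j _; rewrite /bump leq0n add1n exprS mulrCA.
have zlamE : (z *m diag_mx lam) 0 i = lam 0 i * z 0 i.
  by rewrite mul_mx_diag mxE mulrC.
rewrite kalman_covS kalman_step_update qformD qform_congr seriesSl mulrDl.
apply: lerD; last exact: qform_diag_ge.
rewrite [_ * series _ _]mulrC -mulrA -exprMn -zlamE.
exact: kalman_update_unobserved.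
Qed.

End DiagonalRecursion.

Section StationaryCovariance.
Variables (R : realType) (n p : nat) (lam : 'rV[R]_n) (W : 'M[R]_n)
  (C : 'M[R]_(p, n)) (Sig0 Sig : 'M[R]_n).
Hypotheses (diagW : is_diag_mx W) (psdW : psd W) (psdSig0 : psd Sig0).
Hypothesis cvgSig : forall i j : 'I_n,
  (fun k => kalman_cov (diag_mx lam) W C 0 Sig0 k i j) @ \oo --> Sig i j.

Local Notation P k := (kalman_cov (diag_mx lam) W C 0 Sig0 k).

Let cvgSigS i : (fun k => P k.+1 i i) @ \oo --> Sig i i.
Proof. by move: (@cvgSig i i); rewrite -cvg_shiftS. Qed.

Lemma stationary_ge_noise i : W i i <= Sig i i.
Proof.
apply: (ler_cvg_to (cvg_cst _) (@cvgSigS i)); apply: nearW => k.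
exact: kalman_cov_ge_noise.
Qed.

Lemma stationary_le_open_loop i :
  lam 0 i ^+ 2 < 1 -> Sig i i <= W i i / (1 - lam 0 i ^+ 2).
Proof.
move=> lam2_lt1; rewrite ler_pdivlMr ?subr_gt0 // mulrBr mulr1 lerBlDr.
have cvg_step : (fun k => lam 0 i ^+ 2 * P k i i + W i i) @ \oo
    --> lam 0 i ^+ 2 * Sig i i + W i i.
  by apply: cvgD; [exact: cvgMl_tmp | exact: cvg_cst].
rewrite addrC mulrC; apply: (ler_cvg_to (@cvgSigS i) cvg_step).
by apply: nearW => k; exact: kalman_cov_le_step.
Qed.

Lemma stationary_observed i : ((delta_mx 0 i : 'rV_n) <= C)%MS -> Sig i i = W i i.
Proof.
move=> ei_row; apply/le_anti; rewrite stationary_ge_noise andbT.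
apply: (ler_cvg_to (@cvgSigS i) (cvg_cst _)); apply: nearW => k.
by rewrite kalman_cov_observed.
Qed.

Lemma stationary_unobserved i : col i C = 0 -> lam 0 i ^+ 2 < 1 ->
  W i i / (1 - lam 0 i ^+ 2) <= Sig i i.
Proof.
move=> Ci0 lam2_lt1.
have lam2_norm_lt1 : `|lam 0 i ^+ 2| < 1 by rewrite ger0_norm ?sqr_ge0.
have cvg_series := @cvg_geometric_series R (W i i) _ lam2_norm_lt1.
apply: (ler_cvg_to cvg_series (@cvgSig i i)); apply: nearW => k.
have := kalman_cov_unobserved lam diagW psdW psdSig0 Ci0 k (delta_mx 0 i).
by rewrite qform_delta mxE !eqxx expr1n mulr1.
Qed.

End StationaryCovariance.

Theorem lemma2 (R : realType) (n m q : nat) (lam : 'rV[R]_n) (W : 'M[R]_n)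
    (C : 'M[R]_(m, n)) (s : 'I_m -> 'I_q) (Sig0 : 'M[R]_n) :
  (forall i : 'I_n, 0 <= `|lam 0 i| < 1) ->
  is_diag_mx W -> psd W ->
  psd Sig0 ->
  forall (mu : {ffun 'I_q -> bool}) (Sig : 'M[R]_n),
  (forall i j : 'I_n,
     (fun k => kalman_cov (diag_mx lam) W (Csel C s mu) 0 Sig0 k i j)
       @ \oo --> (Sig i j : R)) ->
  [/\ (forall i : 'I_n, W i i <= Sig i i <= W i i / (1 - lam 0 i ^+ 2)),
      (forall i : 'I_n, W i i = 0 -> Sig i i = 0),
      (forall i : 'I_n, lam 0 i = 0 -> Sig i i = W i i),
      (forall i : 'I_n, W i i != 0 -> col i (Csel C s mu) = 0 ->
          Sig i i = W i i / (1 - lam 0 i ^+ 2))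
    & (forall i : 'I_n, ((delta_mx 0 i : 'rV[R]_n) <= Csel C s mu)%MS -> Sig i i = W i i)].
Proof.
move=> lam_lt1 diagW psdW psdSig0 mu Sig cvgSig.
have lam2_lt1 i : lam 0 i ^+ 2 < 1.
  by have /andP[_] := lam_lt1 i; rewrite -real_normK ?num_real // expr_lt1.
have bounds i : W i i <= Sig i i <= W i i / (1 - lam 0 i ^+ 2).
  by rewrite (stationary_ge_noise psdW psdSig0 cvgSig)
    (stationary_le_open_loop psdW psdSig0 cvgSig).
split => // [i Wi0 | i lami0 | i _ Ci0 | i ei_row].
- by apply/le_anti; have := bounds i; rewrite Wi0 mul0r andbC.
- by apply/le_anti; have := bounds i; rewrite lami0 expr0n subr0 divr1 andbC.
- apply/le_anti; rewrite (stationary_le_open_loop psdW psdSig0 cvgSig) //.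
  exact: (stationary_unobserved diagW psdW psdSig0 cvgSig Ci0).
- exact: (stationary_observed psdW psdSig0 cvgSig ei_row).
Qed.
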